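(* Let $\Gamma=((V,E),m)$ be an EAFC system with $V$ finite, $G=G_\Gamma$ and $S\subseteq V$. Then $QZ_G(G_S)=\bigcap_{s\in S}QZ_G(G_{\{s\}})$; that is, if $g\in G$ satisfies $gSg^{-1}=S$ then $gsg^{-1}=s$ for every $s\in S$. Moreover, for every $g\in N_G(G_S)\setminus G_S$ there exists $g'\in N_G(G_S)$ with $g'G_S=gG_S$ such that $g'$ commutes with every element of $G_S$.
   Context: An Artin–Tits system $\Gamma=((V,E),m)$ consists of a simplicial graph $(V,E)$ and a labelling $m\colon E\to\{2,3,\dots\}$; $G_\Gamma=\langle V \mid \mathrm{prod}(u,v,m(\{u,v\}))=\mathrm{prod}(v,u,m(\{u,v\}))\ \forall \{u,v\}\in E\rangle$, where $\mathrm{prod}(u,v,n)$ is the prefix of length $n$ of $uvuv\cdots$. An EAFC system has all labels even and among any three pairwise adjacent vertices at least two of the three edges have label $2$. For $S\subseteq V$, $G_S=\langle S\rangle$. The normalizer is $N_G(G_S)=\{g\in G\mid gG_Sg^{-1}=G_S\}$ and the quasi-centralizer is $QZ_G(G_S)=\{g\in G\mid gS=Sg\}$ (equality of subsets of $G$). *)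

(* Artin–Tits groups are encoded by their
   presentation: elements are words in V^{±1}, and equality in G_Gamma is the
   congruence generated by free cancellation and the Artin relations. *)
From mathcomp Require Import all_boot.
From Stdlib Require Import Relations.
Set Implicit Arguments. Unset Strict Implicit. Unset Printing Implicit Defensive.

Definition AT_system (V : finType) (E : rel V) (m : V -> V -> nat) : Prop :=
  [/\ forall u v, E u v = E v u,
      forall u, ~~ E u u,
      forall u v, E u v -> m u v = m v u
    & forall u v, E u v -> 2 <= m u v].

Definition EAFC_system (V : finType) (E : rel V) (m : V -> V -> nat) : Prop :=
  [/\ AT_system E m,
      forall u v, E u v -> ~~ odd (m u v)
    & forall u v w, E u v -> E v w -> E u w ->
        [|| (m u v == 2) && (m v w == 2),
            (m u v == 2) && (m u w == 2) | (m v w == 2) && (m u w == 2)]].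

(* letters: (v, false) = v, (v, true) = v^-1 *)
Definition word (V : finType) := seq (V * bool).

Definition letter (V : finType) (v : V) : word V := [:: (v, false)].

Fixpoint alt_prod (V : finType) (u v : V) (n : nat) : word V :=
  if n is n'.+1 then (u, false) :: alt_prod v u n' else [::].

Inductive at_rel (V : finType) (E : rel V) (m : V -> V -> nat)
  : word V -> word V -> Prop :=
| at_rel_cancel : forall (v : V) (b : bool), at_rel E m [:: (v, b); (v, ~~ b)] [::]
| at_rel_artin : forall u v : V, E u v ->
    at_rel E m (alt_prod u v (m u v)) (alt_prod v u (m u v)).

Definition at_step (V : finType) (E : rel V) (m : V -> V -> nat)
  (w1 w2 : word V) : Prop :=
  exists a b r1 r2, at_rel E m r1 r2 /\ w1 = a ++ r1 ++ b /\ w2 = a ++ r2 ++ b.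

Definition at_eq (V : finType) (E : rel V) (m : V -> V -> nat) : relation (word V) :=
  clos_refl_sym_trans (word V) (at_step E m).

Definition wmul (V : finType) (g h : word V) : word V := g ++ h.
Definition winv (V : finType) (g : word V) : word V :=
  rev [seq (x.1, ~~ x.2) | x <- g].

Definition in_parabolic (V : finType) (E : rel V) (m : V -> V -> nat)
  (S : {set V}) (g : word V) : Prop :=
  exists w : word V, all (fun x => x.1 \in S) w /\ at_eq E m g w.

Definition in_normalizer (V : finType) (E : rel V) (m : V -> V -> nat)
  (S : {set V}) (g : word V) : Prop :=
  (forall h, in_parabolic E m S h ->
     in_parabolic E m S (wmul (wmul g h) (winv g))) /\
  (forall h, in_parabolic E m S h ->
     exists h', in_parabolic E m S h' /\
       at_eq E m h (wmul (wmul g h') (winv g))).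

Definition in_quasi_centralizer (V : finType) (E : rel V) (m : V -> V -> nat)
  (S : {set V}) (g : word V) : Prop :=
  (forall s, s \in S -> exists t, t \in S /\
     at_eq E m (wmul g (letter s)) (wmul (letter t) g)) /\
  (forall t, t \in S -> exists s, s \in S /\
     at_eq E m (wmul (letter t) g) (wmul g (letter s))).

(* If g normalizes G_S and x in G_S,
     write x = g x' g^-1 with x' in G_S; applying rho gives x = rho(g) x'
     rho(g)^-1, so g' := g rho(g)^-1 satisfies g' x g'^-1 = x.  This g'
     centralizes G_S, normalizes it, and lies in the coset g G_S. *)
From Stdlib Require Import Relations Lia.
From mathcomp Require Import all_boot zify.
Set Implicit Arguments. Unset Strict Implicit. Unset Printing Implicit Defensive.

Section WordGroup.
Variables (V : finType) (E : rel V) (m : V -> V -> nat).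
Notation eqw := (at_eq E m).

Lemma eqw_refl w : eqw w w. Proof. exact: rst_refl. Qed.
Lemma eqw_sym w1 w2 : eqw w1 w2 -> eqw w2 w1. Proof. exact: rst_sym. Qed.
Lemma eqw_trans w1 w2 w3 : eqw w1 w2 -> eqw w2 w3 -> eqw w1 w3.
Proof. exact: rst_trans. Qed.

Lemma at_eq_least (R : relation (word V)) :
  equivalence _ R -> (forall w1 w2, at_step E m w1 w2 -> R w1 w2) ->
  forall w1 w2, eqw w1 w2 -> R w1 w2.
Proof.
move=> [Rrefl Rtrans Rsym] Rstep w1 w2.
elim=> [x y /Rstep | x | x y _ /Rsym | x y z _ Rxy _ Ryz] //.
exact: Rtrans Rxy Ryz.
Qed.

Lemma at_eq_map (f : word V -> word V) :
  (forall w1 w2, at_step E m w1 w2 -> eqw (f w1) (f w2)) ->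
  forall w1 w2, eqw w1 w2 -> eqw (f w1) (f w2).
Proof.
move=> fstep; apply: at_eq_least => //; split.
- by move=> w; exact: eqw_refl.
- by move=> x y z; exact: eqw_trans.
- by move=> x y; exact: eqw_sym.
Qed.

Lemma eqw_rel r1 r2 : at_rel E m r1 r2 -> eqw r1 r2.
Proof. by move=> H; apply: rst_step; exists [::], [::], r1, r2; rewrite /= !cats0. Qed.

Lemma eqw_cat_l a w1 w2 : eqw w1 w2 -> eqw (a ++ w1) (a ++ w2).
Proof.
move: w1 w2; apply: (at_eq_map (f := cat a)) => _ _ [a' [b [r1 [r2 [H [-> ->]]]]]].
by apply: rst_step; exists (a ++ a'), b, r1, r2; rewrite -!catA.
Qed.

Lemma eqw_cat_r b w1 w2 : eqw w1 w2 -> eqw (w1 ++ b) (w2 ++ b).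
Proof.
move: w1 w2; apply: (at_eq_map (f := cat^~ b)) => _ _ [a [b' [r1 [r2 [H [-> ->]]]]]].
by apply: rst_step; exists a, (b' ++ b), r1, r2; rewrite -!catA.
Qed.

Lemma winv_cat (a b : word V) : winv (a ++ b) = winv b ++ winv a.
Proof. by rewrite /winv map_cat rev_cat. Qed.

Lemma winvK (w : word V) : winv (winv w) = w.
Proof.
rewrite /winv map_rev revK -map_comp.
by elim: w => [|[a b] w IH] //=; rewrite IH negbK.
Qed.

Lemma winv_cancel w : eqw (w ++ winv w) [::].
Proof.
elim: w => [|[a b] w IH]; first exact: eqw_refl.
rewrite /winv /= rev_cons -cats1 -/(winv w) -cat_cons catA.
apply: eqw_trans (eqw_cat_r _ (eqw_cat_l [:: (a, b)] IH)) _.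
exact/eqw_rel/at_rel_cancel.
Qed.

Lemma winv_cancel' w : eqw (winv w ++ w) [::].
Proof. by have := winv_cancel (winv w); rewrite winvK. Qed.

Lemma conj_moveL h x y : eqw x (h ++ y ++ winv h) -> eqw (winv h ++ x ++ h) y.
Proof.
move=> Hx; apply: eqw_trans (eqw_cat_l _ (eqw_cat_r h Hx)) _.
rewrite -!catA catA; apply: eqw_trans (eqw_cat_r _ (winv_cancel' h)) _.
rewrite /=; apply: eqw_trans (eqw_cat_l _ (winv_cancel' h)) _.
by rewrite cats0; exact: eqw_refl.
Qed.

Lemma conj_fixed_commute h x : eqw (h ++ x ++ winv h) x -> eqw (h ++ x) (x ++ h).
Proof.
move=> Hx; apply: eqw_trans (eqw_cat_r h Hx).
rewrite -!catA; apply: eqw_cat_l; apply: eqw_sym.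
apply: eqw_trans (eqw_cat_l x (winv_cancel' h)) _.
by rewrite cats0; exact: eqw_refl.
Qed.

Lemma alt_filter (p : pred (V * bool)) (u v : V) k :
  ~~ (p (u, false) && p (v, false)) ->
  filter p (alt_prod u v k.*2) = filter p (alt_prod v u k.*2).
Proof.
move=> Huv; elim: k => [|k IH] //; rewrite doubleS /= IH.
by case: (p (u, false)) Huv; case: (p (v, false)).
Qed.

Lemma alt_count p (u v : V) k :
  count p (alt_prod u v k.*2) = count p (alt_prod v u k.*2).
Proof. by elim: k => [|k IH] //; rewrite doubleS /= IH; lia. Qed.

Lemma alt_all (p : pred (V * bool)) (u v : V) n :
  p (u, false) -> p (v, false) -> all p (alt_prod u v n).
Proof. by elim: n u v => [|n IH] u v //= Hu Hv; rewrite Hu IH. Qed.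

Hypothesis even_labels : forall u v, E u v -> ~~ odd (m u v).

Lemma label_double u v : E u v -> m u v = (m u v)./2.*2.
Proof.
by move=> Huv; rewrite -[in LHS](odd_double_half (m u v)) (negbTE (even_labels Huv)).
Qed.

(* Exponent sum of v, recorded as the pair (#v, #v^-1) up to the relation
   n+ - n- = n+' - n-' (kept in nat to avoid integers). *)
Definition occurrences (v : V) (b : bool) (w : word V) := count (pred1 (v, b)) w.

Definition same_exponent_sum (v : V) (w1 w2 : word V) :=
  occurrences v false w1 + occurrences v true w2 =
  occurrences v false w2 + occurrences v true w1.

Lemma exponent_sum_invariant v w1 w2 : eqw w1 w2 -> same_exponent_sum v w1 w2.
Proof.
move: w1 w2; apply: at_eq_least; first by split; rewrite /same_exponent_sum; red; lia.
move=> _ _ [a [b [r1 [r2 [[x e | u u' Huu'] [-> ->]]]]]];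
  rewrite /same_exponent_sum /occurrences !count_cat.
- by rewrite /= !xpair_eqE; case: e => /=; case: (x == v) => /=; lia.
- by rewrite (label_double Huu') !(alt_count _ u).
Qed.

Lemma conj_letter_eq g (s t : V) : eqw (g ++ letter s) (letter t ++ g) -> t = s.
Proof.
move=> /(exponent_sum_invariant s); rewrite /same_exponent_sum /occurrences.
rewrite !count_cat /= eqxx /= !xpair_eqE.
by case: (eqVneq t s) => //= _; lia.
Qed.

Lemma quasi_centralizer_pointwise (S : {set V}) g :
  in_quasi_centralizer E m S g <->
  (forall s, s \in S -> in_quasi_centralizer E m [set s] g).
Proof.
split=> [[gS Sg] s sS | Hpt]; last split.
- have [t [_ Hst]] := gS s sS; have ts := conj_letter_eq Hst; subst t.
  by split=> _ /set1P ->; exists s; rewrite set11 //; split=> //; exact: eqw_sym.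
- by move=> s sS; have [_ [/set1P -> Hs]] := (Hpt s sS).1 s (set11 s); exists s.
- by move=> t tS; have [_ [/set1P -> Ht]] := (Hpt t tS).2 t (set11 t); exists t.
Qed.

Variable S : {set V}.

Definition in_S (x : V * bool) := x.1 \in S.

Definition retract (w : word V) : word V := filter in_S w.

Lemma retract_cat a b : retract (a ++ b) = retract a ++ retract b.
Proof. exact: filter_cat. Qed.

Lemma retract_winv w : retract (winv w) = winv (retract w).
Proof. by rewrite /retract /winv filter_rev filter_map. Qed.

Lemma retract_id w : all in_S w -> retract w = w.
Proof. by move/all_filterP. Qed.

(* Erasing preserves the defining relators; evenness makes the Artin
   relation on an edge with one endpoint outside S collapse to a
   tautology. *)
Lemma retract_rel r1 r2 : at_rel E m r1 r2 -> eqw (retract r1) (retract r2).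
Proof.
case=> [x b | u v Huv].
- rewrite /retract /in_S /=; case: (x \in S); last exact: eqw_refl.
  exact/eqw_rel/at_rel_cancel.
- have [/andP[uS vS] | Huv'] := boolP (in_S (u, false) && in_S (v, false)).
  + by rewrite !retract_id ?alt_all //; exact/eqw_rel/at_rel_artin.
  + by rewrite /retract (label_double Huv) alt_filter //; exact: eqw_refl.
Qed.

Lemma retract_eqw w1 w2 : eqw w1 w2 -> eqw (retract w1) (retract w2).
Proof.
move: w1 w2; apply: at_eq_map => _ _ [a [b [r1 [r2 [H [-> ->]]]]]].
by rewrite !retract_cat; apply/eqw_cat_l/eqw_cat_r/retract_rel.
Qed.

Lemma retract_parabolic x : in_parabolic E m S x -> eqw x (retract x).
Proof.
case=> w [Sw Hx]; apply: (eqw_trans Hx).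
by have := retract_eqw (eqw_sym Hx); rewrite (retract_id Sw).
Qed.

Lemma parabolic_retract_winv w : in_parabolic E m S (winv (retract w)).
Proof.
by exists (winv (retract w)); split; [rewrite /winv all_rev all_map; exact: filter_all
                                    | exact: eqw_refl].
Qed.

Definition correction (g : word V) := g ++ winv (retract g).

(* Conjugation by the correction of a normalizing element is trivial on
   G_S: writing x = g x' g^-1, rho gives x = rho(g) x' rho(g)^-1. *)
Lemma correction_conj_fixed g x :
  in_normalizer E m S g -> in_parabolic E m S x ->
  eqw (correction g ++ x ++ winv (correction g)) x.
Proof.
move=> [_ Ng] Sx; have [x' [Sx' Hx]] := Ng x Sx.
rewrite /wmul -!catA in Hx.
have Hrho : eqw x (retract g ++ x' ++ winv (retract g)).
{ apply: eqw_trans (retract_parabolic Sx) _.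
  apply: eqw_trans (retract_eqw Hx) _.
  rewrite !retract_cat retract_winv.
  exact/eqw_cat_l/eqw_cat_r/eqw_sym/retract_parabolic. }
rewrite /correction winv_cat winvK -!catA.
apply: eqw_trans (eqw_sym Hx).
by rewrite !catA; apply: eqw_cat_r; rewrite -!catA; apply/eqw_cat_l/conj_moveL.
Qed.

End WordGroup.

Theorem lemma2p12 (V : finType) (E : rel V) (m : V -> V -> nat) (S : {set V}) :
  EAFC_system E m ->
  (forall g : word V,
     in_quasi_centralizer E m S g <->
     (forall s, s \in S -> in_quasi_centralizer E m [set s] g)) /\
  (forall g : word V,
     in_normalizer E m S g -> ~ in_parabolic E m S g ->
     exists g' : word V,
       in_normalizer E m S g' /\
       in_parabolic E m S (wmul (winv g) g') /\
       (forall h, in_parabolic E m S h -> at_eq E m (wmul g' h) (wmul h g'))).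
Proof.
case=> _ even_labels _; split=> [g | g Ng _].
  exact: quasi_centralizer_pointwise.
have fixed := correction_conj_fixed even_labels Ng.
exists (correction S g); split; [split | split].
- move=> x /[dup] Sx [w [Sw Hxw]]; exists w; split=> //.
  by rewrite /wmul -catA; exact: eqw_trans (fixed x Sx) Hxw.
- move=> x Sx; exists x; split=> //.
  by rewrite /wmul -catA; exact/eqw_sym/fixed.
- have [w [Sw Hw]] := parabolic_retract_winv E m S g; exists w; split=> //.
  apply: eqw_trans Hw; rewrite /wmul /correction catA.
  exact: (eqw_cat_r _ (winv_cancel' _ _ g)).
- by move=> x Sx; exact/conj_fixed_commute/fixed.
Qed.
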